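(* Let $(Z,S)$ be an aperiodic zero-dimensional topological dynamical system. For every positive integer $N$ there exist a clopen set $B\subset Z$, a continuous function $h:B\to R_N=\{N+1,\ldots,2N+1\}$ and a homeomorphism $T_B:B\to B$ such that $(Z,S)$ is isomorphic (as a dynamical system, i.e. via an equivariant homeomorphism) to the special topological dynamical system $(Q_N,T')$ induced by $(B,T_B,h)$.
   Context: A t.d.s. is a compact metric space with a homeomorphism; aperiodic means no periodic points; zero-dimensional means clopen sets form a basis. Special t.d.s.: given a zero-dimensional compact metric space $B$, a homeomorphism $T_B:B\to B$ and a continuous $h:B\to\mathbb{Z}_{\ge0}$, let $Q=\{(b,z): b\in B,\ 0\le z<h(b)\}\subset B\times\mathbb{Z}_{\ge0}$ and $T'(b,z)=(b,z+1)$ if $z+1<h(b)$, $T'(b,z)=(T_B(b),0)$ if $z+1=h(b)$. $(Q,T')$ is the special t.d.s. induced by $(B,T_B,h)$. *)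

From Stdlib Require Import Reals Lra Lia List Arith.
Open Scope R_scope.

Definition is_metric {X : Type} (d : X -> X -> R) : Prop :=
  (forall x y, 0 <= d x y) /\
  (forall x y, d x y = 0 <-> x = y) /\
  (forall x y, d x y = d y x) /\
  (forall x y z, d x z <= d x y + d y z).

Definition open_set {X : Type} (d : X -> X -> R) (U : X -> Prop) : Prop :=
  forall x, U x -> exists r, 0 < r /\ forall y, d x y < r -> U y.

Definition closed_set {X : Type} (d : X -> X -> R) (C : X -> Prop) : Prop :=
  open_set d (fun x => ~ C x).

Definition clopen {X : Type} (d : X -> X -> R) (C : X -> Prop) : Prop :=
  open_set d C /\ closed_set d C.

Definition compact_space {X : Type} (d : X -> X -> R) : Prop :=
  forall (I : Type) (U : I -> X -> Prop),
    (forall i, open_set d (U i)) ->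
    (forall x, exists i, U i x) ->
    exists l : list I, forall x, exists i, In i l /\ U i x.

Definition zero_dimensional {X : Type} (d : X -> X -> R) : Prop :=
  forall (U : X -> Prop) x, open_set d U -> U x ->
    exists C, clopen d C /\ C x /\ forall y, C y -> U y.

Definition continuous_map {X Y : Type} (dX : X -> X -> R) (dY : Y -> Y -> R)
  (f : X -> Y) : Prop :=
  forall x eps, 0 < eps -> exists delta, 0 < delta /\
    forall x', dX x x' < delta -> dY (f x) (f x') < eps.

Definition homeomorphism {X Y : Type} (dX : X -> X -> R) (dY : Y -> Y -> R)
  (f : X -> Y) : Prop :=
  continuous_map dX dY f /\
  exists g : Y -> X, continuous_map dY dX g /\
    (forall x, g (f x) = x) /\ (forall y, f (g y) = y).

Definition aperiodic {X : Type} (S : X -> X) : Prop :=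
  forall x (n : nat), (0 < n)%nat -> Nat.iter n S x <> x.

Definition sub_dist {X : Type} (d : X -> X -> R) (B : X -> Prop)
  (a b : {x : X | B x}) : R := d (proj1_sig a) (proj1_sig b).

(* The metric inherited by Z_{>=0} from R is discrete; we use the discrete
   metric, which induces the same topology. *)
Definition dnat (m n : nat) : R := if Nat.eq_dec m n then 0 else 1.

Section Special.
Context {Z : Type} (B : Z -> Prop).
Let BT := {x : Z | B x}.
Context (TB : BT -> BT) (h : BT -> nat).

Definition Qspace : Type := {p : BT * nat | (snd p < h (fst p))%nat}.

Definition Qdist (d : Z -> Z -> R) (p q : Qspace) : R :=
  sub_dist d B (fst (proj1_sig p)) (fst (proj1_sig q)) +
  dnat (snd (proj1_sig p)) (snd (proj1_sig q)).

Definition specialT (hpos : forall b, (0 < h b)%nat) (p : Qspace) : Qspace :=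
  match p with
  | exist _ (b, z) _ =>
      match Compare_dec.lt_dec (S z) (h b) with
      | left H => exist _ (b, S z) H
      | right _ => exist (fun p : BT * nat => (snd p < h (fst p))%nat)
                         (TB b, 0%nat) (hpos (TB b))
      end
  end.
End Special.

Lemma range_pos {X : Type} (h : X -> nat) (N : nat) :
  (forall b, (N + 1 <= h b <= 2 * N + 1)%nat) -> forall b, (0 < h b)%nat.
Proof. intros H b; specialize (H b); lia. Qed.

(* This is the Kakutani-Rokhlin tower construction.  A set B is "separated"
   if no orbit visits it twice within N steps, and x is "near" B if S^j x or
   S^-j x lies in B for some j <= N.  Aperiodicity and zero-dimensionality
   give every point a separated clopen neighbourhood; compactness and a greedy
   union of finitely many of them give a separated clopen marker set B that
   every point is near (marker_exists).  Then the first return time h to B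
   lies in [N+1, 2N+1], every z is S^k b for a unique b in B and k < h b, and
   z |-> (b, k) conjugates S to the special map over the first return map
   (tower_representation).  All continuity statements rest on one principle:
   the least m for which a clopen condition P m holds is locally constant
   (least_level_open). *)

From Stdlib Require Import Reals Lra Lia List Arith Classical ClassicalEpsilon ProofIrrelevance.
Open Scope R_scope.

Definition is_least (P : nat -> Prop) (n : nat) : Prop :=
  P n /\ forall m, (m < n)%nat -> ~ P m.

Lemma is_least_exists (P : nat -> Prop) : (exists n, P n) -> exists n, is_least P n.
Proof.
  intros [n Hn]. induction n as [n IH] using lt_wf_ind.
  destruct (classic (exists m, (m < n)%nat /\ P m)) as [[m [Hm Pm]] | Hno].
  - exact (IH m Hm Pm).
  - exists n; split; [exact Hn |]. intros m Hm Pm; apply Hno; eauto.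
Qed.

Lemma is_least_unique (P : nat -> Prop) n n' : is_least P n -> is_least P n' -> n = n'.
Proof.
  intros [Pn Hn] [Pn' Hn'].
  destruct (Nat.lt_trichotomy n n') as [Hlt | [Heq | Hgt]]; auto.
  - exfalso; exact (Hn' n Hlt Pn).
  - exfalso; exact (Hn n' Hgt Pn').
Qed.

(* The least n satisfying P (meaningful when some n does). *)
Definition least (P : nat -> Prop) : nat := epsilon (inhabits 0%nat) (is_least P).

Lemma least_spec (P : nat -> Prop) : (exists n, P n) -> is_least P (least P).
Proof. intros H. unfold least. apply epsilon_spec, is_least_exists, H. Qed.

Lemma least_eq (P : nat -> Prop) n : is_least P n -> least P = n.
Proof. intros H. apply (is_least_unique P); [apply least_spec; exists n |]; apply H. Qed.

Lemma least_le (P : nat -> Prop) m : P m -> (least P <= m)%nat.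
Proof.
  intros Pm. destruct (least_spec P (ex_intro _ m Pm)) as [_ Hmin].
  destruct (le_lt_dec (least P) m) as [Hle | Hlt]; [exact Hle |].
  exfalso; exact (Hmin m Hlt Pm).
Qed.

Section OpenSets.
Context {X : Type} (d : X -> X -> R).

Lemma open_ext (P Q : X -> Prop) :
  (forall x, P x <-> Q x) -> open_set d P -> open_set d Q.
Proof.
  intros E HP x Qx. destruct (HP x (proj2 (E x) Qx)) as [r [Hr Hball]].
  exists r; split; [exact Hr |]. intros y Hy; apply E; auto.
Qed.

Lemma open_and (P Q : X -> Prop) :
  open_set d P -> open_set d Q -> open_set d (fun x => P x /\ Q x).
Proof.
  intros HP HQ x [Px Qx].
  destruct (HP x Px) as [r1 [Hr1 H1]]. destruct (HQ x Qx) as [r2 [Hr2 H2]].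
  exists (Rmin r1 r2); split; [apply Rmin_glb_lt; auto |].
  intros y Hy; split; [apply H1 | apply H2];
    eapply Rlt_le_trans; eauto; [apply Rmin_l | apply Rmin_r].
Qed.

Lemma open_or (P Q : X -> Prop) :
  open_set d P -> open_set d Q -> open_set d (fun x => P x \/ Q x).
Proof.
  intros HP HQ x [Px | Qx].
  - destruct (HP x Px) as [r [Hr H]]; exists r; split; auto.
  - destruct (HQ x Qx) as [r [Hr H]]; exists r; split; auto.
Qed.

Lemma open_forall_lt (n : nat) (P : nat -> X -> Prop) :
  (forall j, open_set d (P j)) -> open_set d (fun x => forall j, (j < n)%nat -> P j x).
Proof.
  intros HP. induction n as [| n IH].
  - intros x _; exists 1; split; [lra |]. intros y _ j Hj; lia.
  - eapply open_ext; [| exact (open_and _ _ IH (HP n))]. intros x; split.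
    + intros [Hlt Hn] j Hj. destruct (Nat.eq_dec j n) as [-> |]; [exact Hn |].
      apply Hlt; lia.
    + intros H; split; auto.
Qed.

Lemma clopen_const (A : Prop) : clopen d (fun _ => A).
Proof. split; intros x Hx; exists 1; split; auto; lra. Qed.

Lemma clopen_not (C : X -> Prop) : clopen d C -> clopen d (fun x => ~ C x).
Proof.
  intros [Hopen Hclosed]; split; [exact Hclosed |].
  eapply open_ext; [| exact Hopen]. intros x; split; [tauto | apply NNPP].
Qed.

Lemma clopen_and (C D : X -> Prop) :
  clopen d C -> clopen d D -> clopen d (fun x => C x /\ D x).
Proof.
  intros [HC HC'] [HD HD']; split; [exact (open_and _ _ HC HD) |].
  eapply open_ext; [| exact (open_or _ _ HC' HD')]. intros x; tauto.
Qed.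

Lemma clopen_or (C D : X -> Prop) :
  clopen d C -> clopen d D -> clopen d (fun x => C x \/ D x).
Proof.
  intros [HC HC'] [HD HD']; split; [exact (open_or _ _ HC HD) |].
  eapply open_ext; [| exact (open_and _ _ HC' HD')]. intros x; tauto.
Qed.

Lemma clopen_exists_lt (n : nat) (P : nat -> X -> Prop) :
  (forall j, clopen d (P j)) -> clopen d (fun x => exists j, (j < n)%nat /\ P j x).
Proof.
  intros HP. induction n as [| n IH].
  - destruct (clopen_const False) as [Ho Hc]. split.
    + eapply open_ext; [| exact Ho]. intros x; split; [tauto | intros [j [Hj _]]; lia].
    + eapply open_ext; [| exact Hc]. intros x; split; [intros _ [j [Hj _]]; lia | tauto].
  - assert (Hsplit : forall x, ((exists j, (j < n)%nat /\ P j x) \/ P n x) <->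
                               exists j, (j < S n)%nat /\ P j x).
    { intros x; split.
      - intros [[j [Hj Pj]] | Pn]; [exists j; split; [lia | exact Pj] | exists n; auto].
      - intros [j [Hj Pj]]. destruct (Nat.eq_dec j n) as [-> | Hne]; [now right |].
        left; exists j; split; [lia | exact Pj]. }
    destruct (clopen_or _ _ IH (HP n)) as [Ho Hc]. split.
    + exact (open_ext _ _ Hsplit Ho).
    + eapply open_ext; [| exact Hc]. intros x. specialize (Hsplit x). tauto.
Qed.

Lemma least_level_open (P : nat -> X -> Prop) (n : nat) :
  (forall m, clopen d (P m)) -> (forall x, exists m, P m x) ->
  open_set d (fun x => least (fun m => P m x) = n).
Proof.
  intros HP Hex.
  apply (open_ext (fun x => P n x /\ ~ exists m, (m < n)%nat /\ P m x)).
  - intros x; split.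
    + intros [Pn Hno]. apply least_eq; split; [exact Pn |].
      intros m Hm Pm; apply Hno; eauto.
    + intros <-. destruct (least_spec _ (Hex x)) as [Pl Hmin].
      split; [exact Pl |]. intros [m [Hm Pm]]; exact (Hmin m Hm Pm).
  - apply open_and; [apply HP |]. apply clopen_not, clopen_exists_lt, HP.
Qed.

Lemma ball_open (Hd : is_metric d) (x : X) (r : R) : open_set d (fun y => d x y < r).
Proof.
  destruct Hd as [_ [_ [_ Htri]]]. intros y Hy.
  exists (r - d x y); split; [lra |]. intros z Hz. specialize (Htri x y z). lra.
Qed.

End OpenSets.

Lemma open_preimage {X Y : Type} (dX : X -> X -> R) (dY : Y -> Y -> R)
  (f : X -> Y) (U : Y -> Prop) :
  continuous_map dX dY f -> open_set dY U -> open_set dX (fun x => U (f x)).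
Proof.
  intros Hf HU x Ux. destruct (HU _ Ux) as [r [Hr Hball]].
  destruct (Hf x r Hr) as [e [He Hcont]]. exists e; split; auto.
Qed.

Lemma clopen_preimage {X Y : Type} (dX : X -> X -> R) (dY : Y -> Y -> R)
  (f : X -> Y) (C : Y -> Prop) :
  continuous_map dX dY f -> clopen dY C -> clopen dX (fun x => C (f x)).
Proof.
  intros Hf [Ho Hc]; split; [exact (open_preimage _ _ f C Hf Ho) |].
  exact (open_preimage _ _ f (fun y => ~ C y) Hf Hc).
Qed.

Lemma cont_comp {X Y W : Type} (dX : X -> X -> R) (dY : Y -> Y -> R) (dW : W -> W -> R)
  (f : X -> Y) (g : Y -> W) :
  continuous_map dX dY f -> continuous_map dY dW g -> continuous_map dX dW (fun x => g (f x)).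
Proof.
  intros Hf Hg x e He. destruct (Hg (f x) e He) as [e1 [He1 H1]].
  destruct (Hf x e1 He1) as [e2 [He2 H2]]. exists e2; split; auto.
Qed.

Lemma cont_iter {X : Type} (d : X -> X -> R) (f : X -> X) :
  continuous_map d d f -> forall n, continuous_map d d (Nat.iter n f).
Proof.
  intros Hf n; induction n as [| n IH]; simpl.
  - intros x e He; exists e; split; auto.
  - exact (cont_comp d d d _ f IH Hf).
Qed.

Lemma cont_incl {Z : Type} (d : Z -> Z -> R) (B : Z -> Prop) :
  continuous_map (sub_dist d B) d (fun b : {x : Z | B x} => proj1_sig b).
Proof. intros b e He; exists e; split; auto. Qed.

Lemma cont_dnat_of_levels {X : Type} (dX : X -> X -> R) (k : X -> nat) :
  (forall n, open_set dX (fun x => k x = n)) -> continuous_map dX dnat k.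
Proof.
  intros Hk x e He. destruct (Hk (k x) x eq_refl) as [r [Hr Hball]].
  exists r; split; [exact Hr |]. intros y Hy. rewrite (Hball y Hy).
  unfold dnat; destruct (Nat.eq_dec (k x) (k x)); [exact He | congruence].
Qed.

Lemma cont_piecewise {X Y : Type} (dX : X -> X -> R) (dY : Y -> Y -> R)
  (k : X -> nat) (F : nat -> X -> Y) :
  (forall n, open_set dX (fun x => k x = n)) -> (forall n, continuous_map dX dY (F n)) ->
  continuous_map dX dY (fun x => F (k x) x).
Proof.
  intros Hk HF x e He. destruct (Hk (k x) x eq_refl) as [r [Hr Hball]].
  destruct (HF (k x) x e He) as [de [Hde Hcont]].
  exists (Rmin r de); split; [apply Rmin_glb_lt; auto |].
  intros y Hy. rewrite (Hball y (Rlt_le_trans _ _ _ Hy (Rmin_l _ _))).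
  exact (Hcont y (Rlt_le_trans _ _ _ Hy (Rmin_r _ _))).
Qed.

Section QTopology.
Context {Z : Type} (d : Z -> Z -> R) (Hd : is_metric d)
  (B : Z -> Prop) (h : {x : Z | B x} -> nat).

Lemma dnat_nonneg m n : 0 <= dnat m n.
Proof. unfold dnat; destruct (Nat.eq_dec m n); lra. Qed.

Lemma Q_base_cont :
  continuous_map (Qdist B h d) (sub_dist d B) (fun p : Qspace B h => fst (proj1_sig p)).
Proof.
  intros p e He; exists e; split; [exact He |]. intros q Hq. unfold Qdist in Hq.
  pose proof (dnat_nonneg (snd (proj1_sig p)) (snd (proj1_sig q))). lra.
Qed.

(* Points of Q at distance < 1 lie on the same level. *)
Lemma Q_level_open n :
  open_set (Qdist B h d) (fun p : Qspace B h => snd (proj1_sig p) = n).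
Proof.
  intros p Hp. exists 1; split; [lra |]. intros q Hq. rewrite <- Hp.
  unfold Qdist, sub_dist, dnat in Hq.
  destruct (Nat.eq_dec (snd (proj1_sig p)) (snd (proj1_sig q))) as [E | _]; [auto |].
  destruct Hd as [Hnn _]. pose proof (Hnn (proj1_sig (fst (proj1_sig p)))
    (proj1_sig (fst (proj1_sig q)))). lra.
Qed.

Lemma cont_into_Q {X : Type} (dX : X -> X -> R) (f : X -> Qspace B h) :
  continuous_map dX (sub_dist d B) (fun x => fst (proj1_sig (f x))) ->
  continuous_map dX dnat (fun x => snd (proj1_sig (f x))) ->
  continuous_map dX (Qdist B h d) f.
Proof.
  intros Hb Hz x e He.
  destruct (Hb x (e / 2) ltac:(lra)) as [d1 [Hd1 H1]].
  destruct (Hz x (e / 2) ltac:(lra)) as [d2 [Hd2 H2]].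
  exists (Rmin d1 d2); split; [apply Rmin_glb_lt; auto |]. intros y Hy.
  specialize (H1 y (Rlt_le_trans _ _ _ Hy (Rmin_l _ _))).
  specialize (H2 y (Rlt_le_trans _ _ _ Hy (Rmin_r _ _))).
  unfold Qdist. lra.
Qed.

End QTopology.

Lemma sig_eq {A : Type} (P : A -> Prop) (a b : {x | P x}) : proj1_sig a = proj1_sig b -> a = b.
Proof. destruct a, b; simpl; intros; subst; f_equal; apply proof_irrelevance. Qed.

(* A point x moved by a continuous map f has a neighbourhood U disjoint from
   its image f(U): the points y with y near x and f y near f x, both within
   half the displacement d x (f x). *)

Section Displacement.
Context {X : Type} (d : X -> X -> R) (Hd : is_metric d) (f : X -> X).

Definition displaced_nbhd (x y : X) : Prop :=
  d x y < d x (f x) / 2 /\ d (f x) (f y) < d x (f x) / 2.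

Lemma displaced_nbhd_open x : continuous_map d d f -> open_set d (displaced_nbhd x).
Proof.
  intros Hf. apply open_and; [apply ball_open, Hd |].
  exact (open_preimage d d f _ Hf (ball_open d Hd (f x) _)).
Qed.

Lemma displaced_nbhd_center x : f x <> x -> displaced_nbhd x x.
Proof.
  intros Hfx. destruct Hd as [Hnn [Hzero _]].
  assert (Hpos : 0 < d x (f x)).
  { destruct (Hnn x (f x)) as [Hlt | Heq]; [exact Hlt |].
    exfalso; apply Hfx; symmetry; apply Hzero; auto. }
  assert (Hxx : forall z, d z z = 0) by (intros z; apply Hzero; reflexivity).
  unfold displaced_nbhd; rewrite !Hxx; lra.
Qed.

Lemma displaced_nbhd_disjoint x y : displaced_nbhd x y -> ~ displaced_nbhd x (f y).
Proof.
  intros [_ Hy] [Hfy _]. destruct Hd as [_ [_ [Hsym Htri]]].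
  pose proof (Htri x (f y) (f x)). rewrite (Hsym (f y) (f x)) in *. lra.
Qed.

End Displacement.

Section Dynamics.
Context {Z : Type} (d : Z -> Z -> R) (T g : Z -> Z)
  (HTc : continuous_map d d T) (Hgc : continuous_map d d g)
  (Hgs : forall x, g (T x) = x) (Hsg : forall x, T (g x) = x).

Definition Tn (n : nat) : Z -> Z := Nat.iter n T.
Definition gn (n : nat) : Z -> Z := Nat.iter n g.

Lemma Tn_cont n : continuous_map d d (Tn n).
Proof. apply cont_iter, HTc. Qed.

Lemma gn_cont n : continuous_map d d (gn n).
Proof. apply cont_iter, Hgc. Qed.

Lemma Tn_gn n x : Tn n (gn n x) = x.
Proof.
  revert x; induction n as [| n IH]; intros x; [reflexivity |].
  unfold Tn, gn in *. rewrite (Nat.iter_succ_r n _ g). simpl. rewrite IH. apply Hsg.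
Qed.

Lemma gn_Tn n x : gn n (Tn n x) = x.
Proof.
  revert x; induction n as [| n IH]; intros x; [reflexivity |].
  unfold Tn, gn in *. rewrite (Nat.iter_succ_r n _ T). simpl. rewrite IH. apply Hgs.
Qed.

Lemma Tn_gn_le a b x : (a <= b)%nat -> Tn a (gn b x) = gn (b - a) x.
Proof.
  intros H. replace b with (a + (b - a))%nat at 1 by lia.
  unfold gn at 1; rewrite Nat.iter_add. apply Tn_gn.
Qed.

Lemma gn_Tn_le a b x : (a <= b)%nat -> gn a (Tn b x) = Tn (b - a) x.
Proof.
  intros H. replace b with (a + (b - a))%nat at 1 by lia.
  unfold Tn at 1; rewrite Nat.iter_add. apply gn_Tn.
Qed.

Context (Hd : is_metric d) (N : nat).

Definition separated (B : Z -> Prop) : Prop :=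
  forall y, B y -> forall m, (1 <= m <= N)%nat -> ~ B (Tn m y).

Definition near (B : Z -> Prop) (x : Z) : Prop :=
  exists j, (j < N + 1)%nat /\ (B (Tn j x) \/ B (gn j x)).

Lemma near_clopen B : clopen d B -> clopen d (near B).
Proof.
  intros HB. apply clopen_exists_lt. intros j.
  apply clopen_or.
  - exact (clopen_preimage d d (Tn j) B (Tn_cont j) HB).
  - exact (clopen_preimage d d (gn j) B (gn_cont j) HB).
Qed.

Lemma near_mono (B B' : Z -> Prop) x : (forall y, B y -> B' y) -> near B x -> near B' x.
Proof. intros H [j [Hj [HB | HB]]]; exists j; split; auto. Qed.

(* Aperiodicity: every point has a separated clopen neighbourhood, obtained
   inside the intersection of the displaced neighbourhoods for T^1..T^N. *)
Lemma separated_nbhd (Hzd : zero_dimensional d) (Hap : aperiodic T) x :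
  exists U, clopen d U /\ U x /\ separated U.
Proof.
  set (V := fun y => forall m, (m < N)%nat -> displaced_nbhd d (Tn (S m)) x y).
  destruct (Hzd V x) as [C [HC [Cx CV]]].
  - apply open_forall_lt. intros m. apply displaced_nbhd_open; [exact Hd | apply Tn_cont].
  - intros m _. apply displaced_nbhd_center; [exact Hd |]. apply Hap; lia.
  - exists C; split; [exact HC | split; [exact Cx |]].
    intros y Cy m Hm CTy.
    assert (Em : m = S (m - 1)) by lia.
    apply (displaced_nbhd_disjoint d Hd (Tn m) x y).
    + rewrite Em; apply (CV y Cy); lia.
    + rewrite Em at 1; apply (CV _ CTy); lia.
Qed.

Definition extend (B U : Z -> Prop) (y : Z) : Prop := B y \/ (U y /\ ~ near B y).

Lemma extend_clopen B U : clopen d B -> clopen d U -> clopen d (extend B U).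
Proof.
  intros HB HU. apply clopen_or; [exact HB |].
  apply clopen_and; [exact HU |]. apply clopen_not, near_clopen, HB.
Qed.

Lemma extend_separated B U : separated B -> separated U -> separated (extend B U).
Proof.
  intros HB HU y Hy m Hm HTy.
  destruct Hy as [By | [Uy NBy]]; destruct HTy as [BTy | [UTy NBTy]].
  - exact (HB y By m Hm BTy).
  - apply NBTy. exists m; split; [lia |]. right; rewrite gn_Tn; exact By.
  - apply NBy. exists m; split; [lia |]. left; exact BTy.
  - exact (HU y Uy m Hm UTy).
Qed.

Lemma near_extend_l B U x : near B x -> near (extend B U) x.
Proof. apply near_mono. intros y Hy; now left. Qed.

Lemma near_extend_r B U x : U x -> near (extend B U) x.
Proof.
  intros Ux. destruct (classic (near B x)) as [Hn | Hn]; [now apply near_extend_l |].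
  exists 0%nat; split; [lia |]. left; right; split; assumption.
Qed.

Definition greedy (L : list (Z -> Prop)) : Z -> Prop :=
  fold_right (fun U B => extend B U) (fun _ => False) L.

Lemma greedy_marker L : (forall U, In U L -> clopen d U /\ separated U) ->
  clopen d (greedy L) /\ separated (greedy L) /\
  forall U, In U L -> forall x, U x -> near (greedy L) x.
Proof.
  induction L as [| U L IH]; intros HL.
  - split; [apply clopen_const | split]; [intros y [] | intros U []].
  - destruct IH as [HC [HS HN]]; [intros V HV; apply HL; now right |].
    destruct (HL U (or_introl eq_refl)) as [HCU HSU]. simpl; fold (greedy L).
    split; [now apply extend_clopen | split; [now apply extend_separated |]].
    intros V [<- | HV] x Vx.
    + now apply near_extend_r.
    + apply near_extend_l. exact (HN V HV x Vx).
Qed.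

(* By compactness, finitely many separated neighbourhoods cover Z; the greedy
   union of them is a separated clopen set which every point is near. *)
Lemma marker_exists (Hc : compact_space d) (Hzd : zero_dimensional d) (Hap : aperiodic T) :
  exists B, clopen d B /\ separated B /\ forall x, near B x.
Proof.
  set (I := {U : Z -> Prop | clopen d U /\ separated U}).
  destruct (Hc I (fun i => proj1_sig i)) as [l Hl].
  - intros i. exact (proj1 (proj1 (proj2_sig i))).
  - intros x. destruct (separated_nbhd Hzd Hap x) as [U [HCU [Ux HSU]]].
    now exists (exist _ U (conj HCU HSU)).
  - set (L := map (fun i : I => proj1_sig i) l).
    destruct (greedy_marker L) as [HC [HS HN]].
    { intros U HU. apply in_map_iff in HU. destruct HU as [[V HV] [<- _]]; exact HV. }
    exists (greedy L); split; [exact HC | split; [exact HS |]].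
    intros x. destruct (Hl x) as [i [Hi Ui]].
    apply (HN (proj1_sig i)); [apply in_map, Hi | exact Ui].
Qed.

Section Tower.
Context (B : Z -> Prop) (HBc : clopen d B) (HBs : separated B) (HBn : forall x, near B x).

Local Notation BT := {x : Z | B x}.

Lemma hits_forward z : exists m, (1 <= m <= 2 * N + 1)%nat /\ B (Tn m z).
Proof.
  destruct (HBn (Tn (N + 1) z)) as [j [Hj [HB | HB]]].
  - exists (j + (N + 1))%nat; split; [lia |]. unfold Tn; rewrite Nat.iter_add; exact HB.
  - exists (N + 1 - j)%nat; split; [lia |]. rewrite gn_Tn_le in HB; [exact HB | lia].
Qed.

Lemma hits_backward z : exists k, B (gn k z).
Proof.
  destruct (HBn (gn N z)) as [j [Hj [HB | HB]]].
  - exists (N - j)%nat. rewrite Tn_gn_le in HB; [exact HB | lia].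
  - exists (j + N)%nat. unfold gn; rewrite Nat.iter_add; exact HB.
Qed.

Definition return_time (b : BT) : nat :=
  least (fun m => (1 <= m)%nat /\ B (Tn m (proj1_sig b))).
Definition height (z : Z) : nat := least (fun k => B (gn k z)).

Lemma return_time_spec b :
  is_least (fun m => (1 <= m)%nat /\ B (Tn m (proj1_sig b))) (return_time b).
Proof.
  apply least_spec. destruct (hits_forward (proj1_sig b)) as [m [Hm Bm]].
  exists m; split; [lia | exact Bm].
Qed.

Lemma height_spec z : is_least (fun k => B (gn k z)) (height z).
Proof. apply least_spec, hits_backward. Qed.

(* Separation bounds the return time below, nearness bounds it above. *)
Lemma return_time_range b : (N + 1 <= return_time b <= 2 * N + 1)%nat.
Proof.
  destruct (return_time_spec b) as [[Hpos HB] _]. split.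
  - destruct (le_lt_dec (N + 1) (return_time b)) as [Hle | Hlt]; [exact Hle |].
    exfalso; apply (HBs _ (proj2_sig b) (return_time b)); [lia | exact HB].
  - destruct (hits_forward (proj1_sig b)) as [m [Hm Bm]].
    pose proof (least_le (fun m => (1 <= m)%nat /\ B (Tn m (proj1_sig b))) m
      ltac:(split; [lia | exact Bm])). unfold return_time; lia.
Qed.

Lemma return_time_levels n : open_set (sub_dist d B) (fun b => return_time b = n).
Proof.
  apply (least_level_open _ (fun m b => (1 <= m)%nat /\ B (Tn m (proj1_sig b)))).
  - intros m. apply clopen_and; [apply clopen_const |].
    apply (clopen_preimage _ d (fun b : BT => Tn m (proj1_sig b))); [| exact HBc].
    exact (cont_comp _ d d _ _ (cont_incl d B) (Tn_cont m)).
  - intros b. exists (return_time b); apply return_time_spec.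
Qed.

Lemma height_levels n : open_set d (fun z => height z = n).
Proof.
  apply (least_level_open _ (fun k z => B (gn k z))).
  - intros k. exact (clopen_preimage d d (gn k) B (gn_cont k) HBc).
  - exact hits_backward.
Qed.

Definition base (z : Z) : BT := exist B (gn (height z) z) (proj1 (height_spec z)).

Lemma base_cont : continuous_map d (sub_dist d B) base.
Proof. exact (cont_piecewise d d height gn height_levels gn_cont). Qed.

Lemma height_lt z : (height z < return_time (base z))%nat.
Proof.
  destruct (le_lt_dec (return_time (base z)) (height z)) as [Hle | Hlt]; [| exact Hlt].
  exfalso. destruct (return_time_spec (base z)) as [[Hpos HB] _]. simpl in HB.
  rewrite Tn_gn_le in HB by exact Hle.
  apply (proj2 (height_spec z) (height z - return_time (base z))%nat); [lia | exact HB].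
Qed.

Lemma height_in_tower (b : BT) j :
  (j < return_time b)%nat -> height (Tn j (proj1_sig b)) = j.
Proof.
  intros Hj. apply least_eq; split; [rewrite gn_Tn; apply proj2_sig |].
  intros m Hm HB. rewrite gn_Tn_le in HB by lia.
  apply (proj2 (return_time_spec b) (j - m)%nat); [lia | split; [lia | exact HB]].
Qed.

Lemma base_in_tower (b : BT) j : (j < return_time b)%nat -> base (Tn j (proj1_sig b)) = b.
Proof.
  intros Hj. apply sig_eq; simpl. rewrite (height_in_tower b j Hj). apply gn_Tn.
Qed.

Lemma Tn_height_base z : Tn (height z) (proj1_sig (base z)) = z.
Proof. apply Tn_gn. Qed.

Definition first_return (b : BT) : BT :=
  exist B (Tn (return_time b) (proj1_sig b)) (proj2 (proj1 (return_time_spec b))).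
Definition first_return_inv (b : BT) : BT := base (g (proj1_sig b)).

Lemma first_return_cont : continuous_map (sub_dist d B) (sub_dist d B) first_return.
Proof.
  exact (cont_piecewise _ d return_time (fun n b => Tn n (proj1_sig b)) return_time_levels
    (fun n => cont_comp _ d d _ _ (cont_incl d B) (Tn_cont n))).
Qed.

Lemma first_return_inv_cont : continuous_map (sub_dist d B) (sub_dist d B) first_return_inv.
Proof.
  exact (cont_comp _ d _ _ base (cont_comp _ d d _ g (cont_incl d B) Hgc) base_cont).
Qed.

Lemma first_return_invK b : first_return_inv (first_return b) = b.
Proof.
  unfold first_return_inv; simpl.
  destruct (return_time_range b) as [Hlo _].
  change (g (Tn (return_time b) (proj1_sig b)))
    with (gn 1 (Tn (return_time b) (proj1_sig b))).
  rewrite gn_Tn_le by lia. apply base_in_tower; lia.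
Qed.

Lemma first_returnK b : first_return (first_return_inv b) = b.
Proof.
  unfold first_return_inv. set (z := g (proj1_sig b)).
  assert (Eb : proj1_sig b = Tn (S (height z)) (proj1_sig (base z))).
  { unfold Tn; rewrite Nat.iter_succ. fold (Tn (height z)).
    rewrite Tn_height_base; unfold z; now rewrite Hsg. }
  assert (Hret : return_time (base z) = S (height z)).
  { pose proof (height_lt z).
    pose proof (least_le (fun m => (1 <= m)%nat /\ B (Tn m (proj1_sig (base z))))
      (S (height z)) ltac:(split; [lia | rewrite <- Eb; apply proj2_sig])).
    unfold return_time in *; lia. }
  apply sig_eq; simpl. rewrite Hret. symmetry; exact Eb.
Qed.

Definition tower_coord (z : Z) : Qspace B return_time :=
  exist (fun p : BT * nat => (snd p < return_time (fst p))%nat) (base z, height z) (height_lt z).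

Definition tower_point (p : Qspace B return_time) : Z :=
  Tn (snd (proj1_sig p)) (proj1_sig (fst (proj1_sig p))).

Lemma tower_coord_in_tower (b : BT) j H :
  tower_coord (Tn j (proj1_sig b)) = exist _ (b, j) H.
Proof.
  apply sig_eq; simpl. f_equal; [apply base_in_tower | apply height_in_tower]; exact H.
Qed.

Lemma tower_point_coord z : tower_point (tower_coord z) = z.
Proof. apply Tn_height_base. Qed.

Lemma tower_coord_point p : tower_coord (tower_point p) = p.
Proof. destruct p as [[b j] H]. apply tower_coord_in_tower. Qed.

Lemma tower_coord_cont : continuous_map d (Qdist B return_time d) tower_coord.
Proof.
  apply cont_into_Q; [exact base_cont |]. apply cont_dnat_of_levels, height_levels.
Qed.

Lemma tower_point_cont : continuous_map (Qdist B return_time d) d tower_point.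
Proof.
  apply (cont_piecewise _ d (fun p : Qspace B return_time => snd (proj1_sig p))
           (fun n p => Tn n (proj1_sig (fst (proj1_sig p))))).
  - apply Q_level_open, Hd.
  - intros n. apply (cont_comp _ (sub_dist d B) d _ (fun b : BT => Tn n (proj1_sig b))).
    + apply Q_base_cont.
    + exact (cont_comp _ d d _ _ (cont_incl d B) (Tn_cont n)).
Qed.

Lemma tower_coord_equivariant (hpos : forall b, (0 < return_time b)%nat) z :
  tower_coord (T z) = specialT B first_return return_time hpos (tower_coord z).
Proof.
  assert (Ez : T z = Tn (S (height z)) (proj1_sig (base z))).
  { unfold Tn; rewrite Nat.iter_succ. fold (Tn (height z)). now rewrite Tn_height_base. }
  unfold specialT at 1, tower_coord at 2; cbn beta iota.
  destruct (Compare_dec.lt_dec (S (height z)) (return_time (base z))) as [Hlt | Hge].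
  - rewrite Ez. apply tower_coord_in_tower.
  - pose proof (height_lt z).
    assert (Ebot : T z = Tn 0 (proj1_sig (first_return (base z)))).
    { rewrite Ez. change (Tn 0 ?y) with y. unfold first_return; simpl proj1_sig.
      f_equal. lia. }
    rewrite Ebot. apply tower_coord_in_tower.
Qed.

Lemma tower_representation :
  exists (TB : BT -> BT) (h : BT -> nat)
         (hR : forall b, (N + 1 <= h b <= 2 * N + 1)%nat),
    continuous_map (sub_dist d B) dnat h /\
    homeomorphism (sub_dist d B) (sub_dist d B) TB /\
    exists phi : Z -> Qspace B h,
      homeomorphism d (Qdist B h d) phi /\
      forall z, phi (T z) = specialT B TB h (range_pos h N hR) (phi z).
Proof.
  exists first_return, return_time, return_time_range.
  split; [apply cont_dnat_of_levels, return_time_levels |].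
  split.
  - split; [exact first_return_cont |].
    exists first_return_inv.
    split; [exact first_return_inv_cont | split; [exact first_return_invK | exact first_returnK]].
  - exists tower_coord. split; [| apply tower_coord_equivariant].
    split; [exact tower_coord_cont |].
    exists tower_point.
    split; [exact tower_point_cont | split; [exact tower_point_coord | exact tower_coord_point]].
Qed.

End Tower.
End Dynamics.

Theorem mainTheorem6
  (Z : Type) (d : Z -> Z -> R) (Hd : is_metric d) (Hc : compact_space d)
  (Hzd : zero_dimensional d) (S : Z -> Z) (HS : homeomorphism d d S)
  (Hap : aperiodic S) (N : nat) (HN : (0 < N)%nat) :
  exists (B : Z -> Prop) (TB : {x : Z | B x} -> {x : Z | B x})
         (h : {x : Z | B x} -> nat)
         (hR : forall b, (N + 1 <= h b <= 2 * N + 1)%nat),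
    clopen d B /\
    continuous_map (sub_dist d B) dnat h /\
    homeomorphism (sub_dist d B) (sub_dist d B) TB /\
    exists phi : Z -> Qspace B h,
      homeomorphism d (Qdist B h d) phi /\
      forall z, phi (S z) = specialT B TB h (range_pos h N hR) (phi z).
Proof.
  destruct HS as [HSc [g [Hgc [Hgs Hsg]]]].
  destruct (marker_exists d S g HSc Hgc Hgs Hd N Hc Hzd Hap) as [B [HBc [HBs HBn]]].
  destruct (tower_representation d S g HSc Hgc Hgs Hsg Hd N B HBc HBs HBn)
    as [TB [h [hR [Hh [HTB Hphi]]]]].
  exists B, TB, h, hR. split; [exact HBc |]. split; [exact Hh |]. split; [exact HTB | exact Hphi].
Qed.
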